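(* Let $\varphi=\forall x_1\exists y_1\cdots\forall x_k\exists y_k\,P$ be a positive Horn sentence over a finite relational signature $\sigma$ with $P$ a conjunction of equality-free atomic $\sigma$-formulas. Let $R\in\sigma$ be $p$-ary and let $t_1,\dots,t_p,t'\in T_\varphi(C_\omega)$ be such that $\mathrm{rank}(t')$ is distinct from each of $\mathrm{rank}(t_1),\dots,\mathrm{rank}(t_p)$. Then for every $t''\in T_\varphi(C_\omega)$: if $R(t_1,\dots,t_p)$ holds in $\mathcal{T}_\varphi(C_\omega)$, then $R(t_1[t'/t''],\dots,t_p[t'/t''])$ holds in $\mathcal{T}_\varphi(C_\omega)$.
   Context: Let $f_1,\dots,f_k$ be new function symbols, $f_i$ of arity $i$, $\mathrm{Sk}(\varphi)=\forall x_1\cdots\forall x_k\,P(x_1,f_1(x_1),\dots,x_k,f_k(x_1,\dots,x_k))$, and $C_\omega=\{c_1,c_2,\dots\}$ new constants. $T_\varphi(C_\omega)$ is the set of closed terms built from $C_\omega$ with the $f_i$; the rank of a term is the maximal nesting depth of function symbols in it (constants have rank $0$). $\mathcal{T}_\varphi(C_\omega)$ is the $\sigma$-structure on $T_\varphi(C_\omega)$ in which $R(s_1,\dots,s_p)$ holds iff it is obtained from an atom of the matrix of $\mathrm{Sk}(\varphi)$ by substituting terms for $x_1,\dots,x_k$. For terms $t,t',t''$, $t[t'/t'']$ is the term obtained from $t$ by replacing every occurrence of the subterm $t'$ by $t''$. *)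

From Stdlib Require List.
From mathcomp Require Import all_boot.
Set Implicit Arguments.
Unset Strict Implicit.
Unset Printing Implicit Defensive.

(* Closed terms over the constants C_omega = {c_0, c_1, ...} (Const n)
   and the Skolem function symbols f_1..f_k (App i args = f_i(args)). *)
Inductive term : Type :=
| Const of nat
| App of nat & seq term.

Fixpoint term_eqb (s t : term) : bool :=
  match s, t with
  | Const m, Const n => m == n
  | App i ss, App j ts =>
      (i == j) &&
      (fix eqs (ss ts : seq term) : bool :=
         match ss, ts with
         | [::], [::] => true
         | s1 :: ss', t1 :: ts' => term_eqb s1 t1 && eqs ss' ts'
         | _, _ => false
         end) ss ts
  | _, _ => false
  end.

(* Membership in T_phi(C_omega): f_i only for 1 <= i <= k, applied to i args. *)
Fixpoint wf (k : nat) (t : term) : bool :=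
  match t with
  | Const _ => true
  | App i ts => [&& 0 < i, i <= k, size ts == i & all (wf k) ts]
  end.

Fixpoint rank (t : term) : nat :=
  match t with
  | Const _ => 0
  | App _ ts => (foldr maxn 0 (map rank ts)).+1
  end.

(* t[t'/t'']: replace every occurrence of the subterm t' in t by t''. *)
Fixpoint tsubst (t' t'' t : term) : term :=
  if term_eqb t t' then t''
  else match t with
       | Const _ => t
       | App i ts => App i (map (tsubst t' t'') ts)
       end.

(* Variables of phi: VX j = x_{j+1}, VY j = y_{j+1}, j < k. *)
Inductive var (k : nat) : Type :=
| VX of 'I_k
| VY of 'I_k.

(* Value of a variable of the Skolemized matrix under an assignment
   th of the universal variables (x_{m+1} |-> th m):
   y_{j+1} becomes f_{j+1}(x_1, ..., x_{j+1}). *)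
Definition sk_val (k : nat) (th : nat -> term) (v : var k) : term :=
  match v with
  | VX j => th j
  | VY j => App j.+1 (mkseq th j.+1)
  end.

(* The structure T_phi(C_omega): the matrix P is a list of atoms
   (R, [z_1; ...; z_p]) (equality-free atomic formulas, conjunction).
   R(s_1..s_p) holds iff it is obtained from an atom of the matrix of
   Sk(phi) by substituting terms of T_phi(C_omega) for x_1..x_k. *)
Definition holdsT (Sig : Type) (k : nat) (P : seq (Sig * seq (var k)))
    (R : Sig) (s : seq term) : Prop :=
  exists a, List.In a P /\ a.1 = R /\
    exists th : nat -> term,
      (forall m, m < k -> wf k (th m)) /\ s = map (sk_val th) a.2.

(* A fact R(s_1..s_p) of T_phi(C_omega) is an instance, under some assignment th
   of the universal variables, of an atom of the Skolemized matrix: each s_i is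
   either th(x_j) or a Skolem term f_j(th(x_1), ..., th(x_j)).  Replacing t' by t''
   commutes with the instance of a universal variable, and it commutes with the
   instance of f_j(...) as soon as that term is not t' itself, which the rank
   hypothesis guarantees.  Hence the substituted tuple is the instance of the same
   atom under the assignment x_j |-> th(x_j)[t'/t'']. *)

From Stdlib Require List.
From mathcomp Require Import all_boot.

Section TermInd.
Variable Pt : term -> Prop.
Hypothesis Pt_Const : forall n, Pt (Const n).
Hypothesis Pt_App : forall i ts, (forall t, List.In t ts -> Pt t) -> Pt (App i ts).

Fixpoint term_nested_ind (t : term) : Pt t :=
  match t with
  | Const n => Pt_Const n
  | App i ts => Pt_App i ts
      ((fix F (ts : seq term) : forall t, List.In t ts -> Pt t :=
          match ts return forall t, List.In t ts -> Pt t with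
          | nil => fun t H => False_ind _ H
          | s :: ss => fun t H =>
              match H with
              | or_introl e => eq_ind s Pt (term_nested_ind s) t e
              | or_intror H' => F ss t H'
              end
          end) ts)
  end.
End TermInd.

Lemma all_In_impl (T : Type) (a b : pred T) (s : seq T) :
  (forall x, List.In x s -> a x -> b x) -> all a s -> all b s.
Proof.
elim: s => [|x s IHs] //= ab /andP [ax a_s].
rewrite (ab x (or_introl erefl) ax) /=.
by apply: IHs a_s => y y_s; apply: ab; right.
Qed.

Lemma term_eqb_eq (s t : term) : term_eqb s t -> s = t.
Proof.
elim/term_nested_ind: s t => [n|i ss IH] [m|j ts] //=; first by move/eqP->.
case/andP=> /eqP-> Hss; congr App.
elim: ss ts IH Hss => [|s ss IHs] [|t ts] //= IH /andP [Hst Hss].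
rewrite (IH s (or_introl erefl) t Hst); congr cons.
by apply: IHs => // u Hu; apply: IH; right.
Qed.

Lemma tsubst_App_neq (t' t'' : term) (i : nat) (ts : seq term) :
  ~~ term_eqb (App i ts) t' ->
  tsubst t' t'' (App i ts) = App i (map (tsubst t' t'') ts).
Proof. by rewrite /= => /negbTE->. Qed.

Lemma wf_tsubst (k : nat) (t' t'' t : term) :
  wf k t'' -> wf k t -> wf k (tsubst t' t'' t).
Proof.
move=> wf_t''; elim/term_nested_ind: t => [n|i ts IH] /=; first by case: ifP.
case: ifP => // _ /and4P [i_gt0 i_le_k /eqP size_ts wf_ts].
rewrite /= i_gt0 i_le_k size_map size_ts eqxx all_map /=.
exact: all_In_impl wf_ts.
Qed.

Lemma tsubst_sk_val (k : nat) (t' t'' : term) (th : nat -> term) (v : var k) :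
  rank (sk_val th v) != rank t' ->
  tsubst t' t'' (sk_val th v) = sk_val (tsubst t' t'' \o th) v.
Proof.
case: v => [//|j] rank_neq.
have not_t' : ~~ term_eqb (sk_val th (VY j)) t'.
  by apply: contra rank_neq => /term_eqb_eq->.
by rewrite (tsubst_App_neq _ t'' _ _ not_t') /mkseq -map_comp.
Qed.

Theorem mainTheorem11
  (Sig : finType) (ar : Sig -> nat) (k : nat)
  (P : seq (Sig * seq (var k)))
  (HP : forall a, List.In a P -> size a.2 = ar a.1)
  (R : Sig) (ts : seq term) (t' t'' : term)
  (Hsize : size ts = ar R)
  (Hts : all (wf k) ts) (Ht' : wf k t') (Ht'' : wf k t'')
  (Hrank : all (fun t => rank t != rank t') ts) :
  holdsT P R ts -> holdsT P R (map (tsubst t' t'') ts).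
Proof.
case=> a [a_in_P [a_R [th [wf_th ts_eq]]]]; subst ts.
exists a; split=> //; split=> //.
exists (tsubst t' t'' \o th); split=> [m m_lt_k|].
  exact: wf_tsubst (wf_th m m_lt_k).
elim: a.2 Hrank => [|v vs IHvs] //= /andP [rank_v rank_vs].
by rewrite tsubst_sk_val // IHvs.
Qed.
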